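(* Let $\alpha=\beta\otimes\gamma:A^{\Delta}\to(H,V)\circ(H',V')$ be a homomorphism, where $(H,V),(H',V')$ are finite forest algebras with idempotent and commutative horizontal monoids, $\beta:A^{\Delta}\to(H,V)$ is nonconfusing, and $\gamma:(A\times H)^{\Delta}\to(H',V')$ is 1-definite. Then $\alpha$ is nonconfusing.
   Context: $A^{\Delta}$: free forest algebra of forests (finite ordered sequences of finite ordered labelled trees, under concatenation) and contexts (forests with one hole) over $A$. Forest algebra: additive monoid $H$, monoid $V$ acting faithfully on the left, containing $g\mapsto g+h$, $g\mapsto h+g$. Wreath product $(H,V)\circ(H',V')=(H\times H',V\times V'^{H})$ with $(v,f)(h,h')=(vh,f(h)h')$; $\beta\otimes\gamma$ maps $a$ to $(\beta(a),h\mapsto\gamma(a,h))$, so $\beta\otimes\gamma(s)=(\beta(s),\gamma(s^\beta))$ with $s^\beta$ relabeling each node with subtree $at$ by $(a,\beta(t))$. $\gamma$ is 1-definite if $\gamma(s)$ depends only on the set of labels of the root nodes of $s$. Reachability: $h\le h'$ iff $h=vh'$ for some $v$; classes of mutual reachability. For a homomorphism $\delta$ and class $\Gamma$, $\delta_\Gamma$ is the quotient identifying $\{h:h\not>\Gamma\}$ to one absorbing $\infty$; $s^{\delta_\Gamma}$ relabels nodes with subtree $at$ by $(a,\delta_\Gamma(t))$. $\sim_k$ on forests over an alphabet $B$: $\sim_0$ total; $s\sim_{k+1}s'$ iff the sets $\{(b_i,[s_i]_{\sim_k})\}$ for $s=\sum b_is_i$ and for $s'$ coincide. $s_1\equiv_{\delta,k,\Gamma}s_2$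 iff $(s_1)^{\delta_\Gamma}\sim_k(s_2)^{\delta_\Gamma}$ and $\delta(s_1),\delta(s_2)\in\Gamma$. $\delta$ is nonconfusing if there is $k>0$ such that for every reachability class $\Gamma$ of its target, $s_1\equiv_{\delta,k,\Gamma}s_2$ implies $\delta(s_1)=\delta(s_2)$. *)

From HB Require Import structures.
From mathcomp Require Import all_boot.
From Stdlib Require List.
Set Implicit Arguments. Unset Strict Implicit. Unset Printing Implicit Defensive.

Record forest_algebra := ForestAlgebra {
  fa_H : finType;
  fa_V : finType;
  fa_add : fa_H -> fa_H -> fa_H;
  fa_zero : fa_H;
  fa_mul : fa_V -> fa_V -> fa_V;
  fa_one : fa_V;
  fa_act : fa_V -> fa_H -> fa_H;
  fa_addA : forall x y z, fa_add x (fa_add y z) = fa_add (fa_add x y) z;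
  fa_add0h : forall x, fa_add fa_zero x = x;
  fa_addh0 : forall x, fa_add x fa_zero = x;
  fa_mulA : forall u v w, fa_mul u (fa_mul v w) = fa_mul (fa_mul u v) w;
  fa_mul1v : forall v, fa_mul fa_one v = v;
  fa_mulv1 : forall v, fa_mul v fa_one = v;
  fa_actM : forall v w h, fa_act (fa_mul v w) h = fa_act v (fa_act w h);
  fa_act1 : forall h, fa_act fa_one h = h;
  fa_faithful : forall v w, (forall h, fa_act v h = fa_act w h) -> v = w;
  fa_addl : forall h, exists v, forall g, fa_act v g = fa_add g h;
  fa_addr : forall h, exists v, forall g, fa_act v g = fa_add h g
}.

Definition hidem (B : forest_algebra) := forall h : fa_H B, fa_add h h = h.
Definition hcomm (B : forest_algebra) :=
  forall h h' : fa_H B, fa_add h h' = fa_add h' h.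

(** * Wreath product (H,V) o (H',V') = (H x H', V x V'^H),
    (v,f)(h,h') = (vh, f(h)h'). *)
Section Wreath.
Variables B C : forest_algebra.

Definition wr_H : finType := (fa_H B * fa_H C)%type.
Definition wr_V : finType := (fa_V B * {ffun fa_H B -> fa_V C})%type.
Definition wr_add (x y : wr_H) : wr_H := (fa_add x.1 y.1, fa_add x.2 y.2).
Definition wr_zero : wr_H := (fa_zero B, fa_zero C).
Definition wr_act (v : wr_V) (x : wr_H) : wr_H := (fa_act v.1 x.1, fa_act (v.2 x.1) x.2).
Definition wr_mul (v w : wr_V) : wr_V :=
  (fa_mul v.1 w.1, [ffun h => fa_mul (v.2 (fa_act w.1 h)) (w.2 h)]).
Definition wr_one : wr_V := (fa_one B, [ffun _ => fa_one C]).

Lemma wr_addA x y z : wr_add x (wr_add y z) = wr_add (wr_add x y) z.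
Proof. by rewrite /wr_add /= !fa_addA. Qed.
Lemma wr_add0h x : wr_add wr_zero x = x.
Proof. by case: x => a b; rewrite /wr_add /= !fa_add0h. Qed.
Lemma wr_addh0 x : wr_add x wr_zero = x.
Proof. by case: x => a b; rewrite /wr_add /= !fa_addh0. Qed.
Lemma wr_mulA u v w : wr_mul u (wr_mul v w) = wr_mul (wr_mul u v) w.
Proof.
rewrite /wr_mul /= fa_mulA; congr pair; apply/ffunP => h; rewrite !ffunE.
by rewrite fa_actM fa_mulA.
Qed.
Lemma wr_mul1v v : wr_mul wr_one v = v.
Proof.
case: v => a f; rewrite /wr_mul /= fa_mul1v; congr pair.
by apply/ffunP => h; rewrite !ffunE fa_mul1v.
Qed.
Lemma wr_mulv1 v : wr_mul v wr_one = v.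
Proof.
case: v => a f; rewrite /wr_mul /= fa_mulv1; congr pair.
by apply/ffunP => h; rewrite !ffunE fa_act1 fa_mulv1.
Qed.
Lemma wr_actM v w x : wr_act (wr_mul v w) x = wr_act v (wr_act w x).
Proof. by rewrite /wr_act /wr_mul /= ffunE !fa_actM. Qed.
Lemma wr_act1 x : wr_act wr_one x = x.
Proof. by case: x => a b; rewrite /wr_act /= ffunE !fa_act1. Qed.
Lemma wr_faithful v w : (forall x, wr_act v x = wr_act w x) -> v = w.
Proof.
case: v => v f; case: w => w g /= E.
have E1 : v = w.
  apply: fa_faithful => h.
  by have := E (h, fa_zero C); rewrite /wr_act /= => -[].
subst w; congr pair; apply/ffunP => h; apply: fa_faithful => h'.
by have := E (h, h'); rewrite /wr_act /= => -[].
Qed.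
Lemma wr_addl x : exists v, forall y, wr_act v y = wr_add y x.
Proof.
case: (fa_addl x.1) => v Hv; case: (fa_addl x.2) => v' Hv'.
by exists (v, [ffun _ => v']) => y; rewrite /wr_act /wr_add /= ffunE Hv Hv'.
Qed.
Lemma wr_addr x : exists v, forall y, wr_act v y = wr_add x y.
Proof.
case: (fa_addr x.1) => v Hv; case: (fa_addr x.2) => v' Hv'.
by exists (v, [ffun _ => v']) => y; rewrite /wr_act /wr_add /= ffunE Hv Hv'.
Qed.

Definition wreath : forest_algebra :=
  @ForestAlgebra wr_H wr_V wr_add wr_zero wr_mul wr_one wr_act
    wr_addA wr_add0h wr_addh0 wr_mulA wr_mul1v wr_mulv1 wr_actM wr_act1
    wr_faithful wr_addl wr_addr.
End Wreath.

(** The free forest algebra A^Delta is generated by the contexts a[] (a in A),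
    so a homomorphism A^Delta -> (H,V) is uniquely determined by (and given as)
    the images of the generators a[] : a map [g : A -> V]; its value on
    forests is [eval g] : eval (a t) = g(a) . eval t, eval (s + s') = eval s + eval s',
    eval 0 = 0. *)
Inductive tree (A : Type) : Type := Node of A & seq (tree A).
Definition forest (A : Type) := seq (tree A).

Section Eval.
Variables (A : Type) (B : forest_algebra) (g : A -> fa_V B).
Fixpoint eval_tree (t : tree A) : fa_H B :=
  let: Node a ts := t in
  fa_act (g a)
    ((fix ef (ts : seq (tree A)) : fa_H B :=
        if ts is t :: ts' then fa_add (eval_tree t) (ef ts') else fa_zero B) ts).
Definition eval (s : forest A) : fa_H B :=
  foldr (fun t acc => fa_add (eval_tree t) acc) (fa_zero B) s.
End Eval.

Definition tensor (A : Type) (B C : forest_algebra)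
  (beta : A -> fa_V B) (gamma : A * fa_H B -> fa_V C) : A -> fa_V (wreath B C) :=
  fun a => (beta a, [ffun h => gamma (a, h)]).

Definition reach (B : forest_algebra) (h h' : fa_H B) : bool :=
  [exists v, h == fa_act v h'].
Definition in_class (B : forest_algebra) (e h : fa_H B) : bool :=
  reach h e && reach e h.
Definition above_class (B : forest_algebra) (e h : fa_H B) : bool :=
  reach e h && ~~ reach h e.

(** delta_Gamma : values not > Gamma are identified to one absorbing element
    infinity, encoded as [None]; the other values h are encoded as [Some h]. *)
Definition quot_val (B : forest_algebra) (e h : fa_H B) : option (fa_H B) :=
  if above_class e h then Some h else None.

Section Relab.
Variables (A : Type) (B : forest_algebra) (g : A -> fa_V B) (e : fa_H B).
Fixpoint relab_tree (t : tree A) : tree (A * option (fa_H B)) :=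
  let: Node a ts := t in Node (a, quot_val e (eval g ts)) (map relab_tree ts).
Definition relab (s : forest A) : forest (A * option (fa_H B)) := map relab_tree s.
End Relab.

Fixpoint simk (B : Type) (k : nat) (s s' : forest B) : Prop :=
  match k with
  | 0 => True
  | k'.+1 =>
      (forall b c, List.In (Node b c) s ->
         exists c', List.In (Node b c') s' /\ simk k' c c') /\
      (forall b c', List.In (Node b c') s' ->
         exists c, List.In (Node b c) s /\ simk k' c c')
  end.

Definition equivk (A : Type) (B : forest_algebra) (g : A -> fa_V B) (k : nat)
  (e : fa_H B) (s1 s2 : forest A) : Prop :=
  simk k (relab g e s1) (relab g e s2) /\
  in_class e (eval g s1) /\ in_class e (eval g s2).

Definition nonconfusing (A : Type) (B : forest_algebra) (g : A -> fa_V B) : Prop :=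
  exists k, 0 < k /\
    forall (e : fa_H B) (s1 s2 : forest A),
      equivk g k e s1 s2 -> eval g s1 = eval g s2.

Definition one_definite (A : Type) (B : forest_algebra) (g : A -> fa_V B) : Prop :=
  forall s s' : forest A,
    (forall a, (exists c, List.In (Node a c) s) <-> (exists c, List.In (Node a c) s')) ->
    eval g s = eval g s'.

From mathcomp Require Import all_boot.
From Stdlib Require List.
Set Implicit Arguments. Unset Strict Implicit. Unset Printing Implicit Defensive.

(** Writing s^beta for s with each node a t relabelled by (a, beta(t)), one has
    alpha(s) = (beta(s), gamma(s^beta)).  Projecting onto the first coordinate
    turns ==_{alpha,k+1,Gamma} into ==_{beta,k+1,Gamma_1}, where Gamma_1 is the
    class of the first components, so beta(s1) = beta(s2).  As gamma is
    1-definite, it remains to see that s1^beta and s2^beta have the same root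
    labels (a, beta(t)).  A root a t of s1 is matched by a root a t' of s2 with
    the same delta_Gamma-value and with t ~_k t' after relabelling: either both
    values exceed Gamma and then alpha(t) = alpha(t'), or both lie in Gamma, and
    then t ==_{beta,k,Gamma_1} t' and nonconfusion of beta gives
    beta(t) = beta(t'). *)

Lemma tree_ind_In (X : Type) (P : tree X -> Prop) :
  (forall a ts, (forall t, List.In t ts -> P t) -> P (Node a ts)) ->
  forall t, P t.
Proof.
move=> IHnode; fix IH 1 => -[a ts]; apply: IHnode.
move: ts; fix IHs 1 => -[|t ts] u /=; first by case.
by case=> [<-|]; [exact: IH | exact: IHs].
Qed.

Fixpoint tree_map (X Y : Type) (f : X -> Y) (t : tree X) : tree Y :=
  let: Node a ts := t in Node (f a) (map (tree_map f) ts).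

Section Simk.
Variable X : Type.

Lemma simk_map (Y : Type) (f : X -> Y) k (s s' : forest X) :
  simk k s s' -> simk k (map (tree_map f) s) (map (tree_map f) s').
Proof.
elim: k s s' => [//|k IH] s s' /= [sub_ss' sub_s's].
split=> b c /List.in_map_iff [[b0 c0] [[<- <-] in_s]].
- have [c' [in_s' sim_c]] := sub_ss' _ _ in_s.
  exists (map (tree_map f) c'); split; last exact: IH.
  exact: (List.in_map (tree_map f) _ (Node b0 c')).
- have [c' [in_s' sim_c]] := sub_s's _ _ in_s.
  exists (map (tree_map f) c'); split; last exact: IH.
  exact: (List.in_map (tree_map f) _ (Node b0 c')).
Qed.

Lemma simk_pred k (s s' : forest X) : simk k.+1 s s' -> simk k s s'.
Proof.
elim: k s s' => [//|k IH] s s' /= [sub_ss' sub_s's]; split=> b c.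
- by move/sub_ss' => [c' [? /IH]]; exists c'.
- by move/sub_s's => [c' [? /IH]]; exists c'.
Qed.

Lemma simk_sym k (s s' : forest X) : simk k s s' -> simk k s' s.
Proof.
elim: k s s' => [//|k IH] s s' /= [sub_ss' sub_s's]; split=> b c.
- by move/sub_s's => [c' [? /IH]]; exists c'.
- by move/sub_ss' => [c' [? /IH]]; exists c'.
Qed.
End Simk.

Section Reach.
Variable B : forest_algebra.
Implicit Types h : fa_H B.

Lemma reachP h h' : reflect (exists v, h = fa_act v h') (reach h h').
Proof. by apply: (iffP existsP) => -[v /eqP]; exists v. Qed.

Lemma reach_trans h1 h2 h3 : reach h1 h2 -> reach h2 h3 -> reach h1 h3.
Proof.
move=> /reachP [v ->] /reachP [w ->]; apply/reachP.
by exists (fa_mul v w); rewrite fa_actM.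
Qed.

Lemma in_class_of_quot_None e h :
  reach e h -> quot_val e h = None -> in_class e h.
Proof.
by rewrite /quot_val /above_class /in_class => ->; case: ifP => // /negbFE ->.
Qed.
End Reach.

Section Eval.
Variables (X : Type) (B : forest_algebra) (g : X -> fa_V B).

Lemma eval_node a ts : eval_tree g (Node a ts) = fa_act (g a) (eval g ts).
Proof. by rewrite /=; congr fa_act; elim: ts => //= t ts ->. Qed.

Lemma reach_eval_node a ts : reach (eval_tree g (Node a ts)) (eval g ts).
Proof. by rewrite eval_node; apply/reachP; exists (g a). Qed.

Lemma reach_eval_In s t : List.In t s -> reach (eval g s) (eval_tree g t).
Proof.
elim: s => [//|t0 s IH] /= [<-|in_s].
- by have [v addv] := fa_addl (eval g s); apply/reachP; exists v; rewrite addv.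
- apply: reach_trans (IH in_s); have [v addv] := fa_addr (eval_tree g t0).
  by apply/reachP; exists v; rewrite addv.
Qed.

Lemma reach_eval_In_node s a ts :
  List.In (Node a ts) s -> reach (eval g s) (eval g ts).
Proof. by move/reach_eval_In/reach_trans; apply; apply: reach_eval_node. Qed.

Lemma relab_In e s a ts : List.In (Node a ts) s ->
  List.In (Node (a, quot_val e (eval g ts)) (relab g e ts)) (relab g e s).
Proof. exact: (List.in_map (relab_tree g e)). Qed.

Lemma In_relab e s b c : List.In (Node b c) (relab g e s) ->
  exists a ts, [/\ b = (a, quot_val e (eval g ts)), c = relab g e ts
                 & List.In (Node a ts) s].
Proof. by case/List.in_map_iff => -[a ts] [[<- <-] in_s]; exists a, ts. Qed.

Lemma equivk_pred k e s1 s2 : equivk g k.+1 e s1 s2 -> equivk g k e s1 s2.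
Proof. by case=> /simk_pred. Qed.

Lemma equivk_sym k e s1 s2 : equivk g k e s1 s2 -> equivk g k e s2 s1.
Proof. by case=> /simk_sym sim [cl1 cl2]. Qed.

Fixpoint annot_tree (t : tree X) : tree (X * fa_H B) :=
  let: Node a ts := t in Node (a, eval g ts) (map annot_tree ts).
Definition annot (s : forest X) := map annot_tree s.

Lemma annot_In s a ts : List.In (Node a ts) s ->
  List.In (Node (a, eval g ts) (annot ts)) (annot s).
Proof. exact: (List.in_map annot_tree). Qed.

Lemma In_annot s b c : List.In (Node b c) (annot s) ->
  exists a ts, b = (a, eval g ts) /\ List.In (Node a ts) s.
Proof. by case/List.in_map_iff => -[a ts] [[<- _] in_s]; exists a, ts. Qed.
End Eval.

Section Tensor.
Variables (A : Type) (B C : forest_algebra).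
Variables (beta : A -> fa_V B) (gamma : A * fa_H B -> fa_V C).
Notation alpha := (tensor beta gamma).
Implicit Types (e h : fa_H (wreath B C)) (s : forest A).

Lemma eval_tensor_of s :
  (forall t, List.In t s ->
     eval_tree alpha t =
       (eval_tree beta t, eval_tree gamma (annot_tree beta t))) ->
  eval alpha s = (eval beta s, eval gamma (annot beta s)).
Proof.
elim: s => [//|t s IH] eval_s /=.
by rewrite eval_s ?IH // => [u in_s|]; [apply: eval_s; right | left].
Qed.

Lemma eval_tensor_tree t :
  eval_tree alpha t = (eval_tree beta t, eval_tree gamma (annot_tree beta t)).
Proof.
elim/tree_ind_In: t => a ts IH.
by rewrite !eval_node eval_tensor_of //= /wr_act /= ffunE.
Qed.

Lemma eval_tensor s : eval alpha s = (eval beta s, eval gamma (annot beta s)).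
Proof. by apply: eval_tensor_of => t _; apply: eval_tensor_tree. Qed.

Lemma reach_fst e h : reach e h -> reach e.1 h.1.
Proof. by move=> /reachP [v ->]; apply/reachP; exists v.1. Qed.

Lemma in_class_fst e h : in_class e h -> in_class e.1 h.1.
Proof. by case/andP => /reach_fst ? /reach_fst ?; apply/andP. Qed.

Definition proj_label (e1 : fa_H B) (p : A * option (fa_H (wreath B C))) :=
  (p.1, obind (fun h => quot_val e1 h.1) p.2).

(* A value reachable from Gamma but not above it lies in Gamma, and then so
   does its first component with respect to the class of e.1. *)
Lemma quot_val_fst e h :
  reach e h ->
  obind (fun h => quot_val e.1 h.1) (quot_val e h) = quot_val e.1 h.1.
Proof.
rewrite /quot_val /above_class => ->; case: ifP => //= /negbFE /reach_fst.
by rewrite /quot_val /above_class => ->; rewrite andbF.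
Qed.

Lemma relab_tree_fst e t : reach e (eval_tree alpha t) ->
  tree_map (proj_label e.1) (relab_tree alpha e t) = relab_tree beta e.1 t.
Proof.
elim/tree_ind_In: t => a ts IH e_t.
have e_ts := reach_trans e_t (reach_eval_node _ a ts).
rewrite /= /proj_label /= quot_val_fst // eval_tensor -map_comp.
congr Node; apply: List.map_ext_in => t in_ts /=.
by apply: IH => //; apply: reach_trans e_ts (reach_eval_In _ in_ts).
Qed.

Lemma relab_fst e s : reach e (eval alpha s) ->
  map (tree_map (proj_label e.1)) (relab alpha e s) = relab beta e.1 s.
Proof.
move=> e_s; rewrite -map_comp; apply: List.map_ext_in => t in_s /=.
by apply: relab_tree_fst; apply: reach_trans e_s (reach_eval_In _ in_s).
Qed.

Lemma equivk_fst k e s1 s2 : equivk alpha k e s1 s2 -> equivk beta k e.1 s1 s2.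
Proof.
have eval_fst s : eval beta s = (eval alpha s).1 by rewrite eval_tensor.
case=> sim [cl1 cl2]; split.
  by rewrite -!relab_fst; [exact: simk_map | case/andP: cl2 | case/andP: cl1].
by rewrite !eval_fst; split; apply: in_class_fst.
Qed.

Section RootLabels.
Variables (k : nat) (e : fa_H (wreath B C)).
Hypothesis beta_nc :
  forall s1 s2, equivk beta k e.1 s1 s2 -> eval beta s1 = eval beta s2.

Lemma eval_eq_of_relab ts ts' :
  reach e (eval alpha ts) -> reach e (eval alpha ts') ->
  quot_val e (eval alpha ts) = quot_val e (eval alpha ts') ->
  simk k (relab alpha e ts) (relab alpha e ts') -> eval beta ts = eval beta ts'.
Proof.
move=> e_ts e_ts'; case q_ts: (quot_val e _) => [h|] q_ts' sim.
- move: q_ts q_ts'; rewrite /quot_val; do 2 case: ifP => // _.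
  by move=> [<-] [/(congr1 fst)]; rewrite !eval_tensor.
- apply/beta_nc/equivk_fst; split=> //.
  by split; apply: in_class_of_quot_None.
Qed.

Lemma annot_roots_sub s1 s2 : equivk alpha k.+1 e s1 s2 ->
  forall b c, List.In (Node b c) (annot beta s1) ->
  exists c', List.In (Node b c') (annot beta s2).
Proof.
case=> -[sub_12 _] [/andP [_ e_s1] /andP [_ e_s2]] b c.
case/In_annot=> a [ts [-> in_s1]].
have [c' [/In_relab [_ [ts' [[<- q_eq] -> in_s2]]] sim]] :=
  sub_12 _ _ (relab_In alpha e in_s1).
rewrite (@eval_eq_of_relab ts ts') //.
- by exists (annot beta ts'); apply: annot_In.
- exact: reach_trans e_s1 (reach_eval_In_node _ in_s1).
- exact: reach_trans e_s2 (reach_eval_In_node _ in_s2).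
Qed.
End RootLabels.
End Tensor.

Theorem lemma8 (A : finType) (B C : forest_algebra)
  (beta : A -> fa_V B) (gamma : A * fa_H B -> fa_V C) :
  hidem B -> hcomm B -> hidem C -> hcomm C ->
  nonconfusing beta -> one_definite gamma ->
  nonconfusing (tensor beta gamma).
Proof.
move=> _ _ _ _ [k [k_gt0 beta_nc]] gamma_1def.
exists k.+1; split=> // e s1 s2 eqv; rewrite !eval_tensor; congr pair.
- exact/beta_nc/equivk_fst/equivk_pred/eqv.
- apply: gamma_1def => b; split=> -[c in_annot].
  + exact: (annot_roots_sub (beta_nc e.1) eqv in_annot).
  + exact: (annot_roots_sub (beta_nc e.1) (equivk_sym eqv) in_annot).
Qed.
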